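(* Let $s=(s_1,\dots,s_m)$ be a sequence of positive integers and let $\alpha$ be a pattern whose largest value $k$ is internal (no copy of $k$ is the first or last letter of $\alpha$) and isolated (no two copies of $k$ are consecutive letters of $\alpha$). Then $\mathrm{Av}_s(\alpha)$ is a zig-zag language.
   Context: For a sequence $s=(s_1,\dots,s_m)$ of positive integers, an $s$-word is a word with exactly $s_i$ copies of $i$ for each $i\in[m]$; $S_s$ is the set of $s$-words. A pattern is a word $\alpha=\alpha_1\cdots\alpha_\ell$ over $[k]$ using every value of $[k]$. A word $w$ contains $\alpha$ if there are indices $i_1<\dots<i_\ell$ such that for all $a,b$: $w_{i_a}<w_{i_b}$ iff $\alpha_a<\alpha_b$, and $w_{i_a}=w_{i_b}$ iff $\alpha_a=\alpha_b$; otherwise $w$ avoids $\alpha$. $\mathrm{Av}_s(\alpha)$ is the set of $s$-words avoiding $\alpha$. Parent operation: $p(s)=(s_1,\dots,s_{m-1},s_m-1)$ if $s_m>1$ and $p(s)=(s_1,\dots,s_{m-1})$ if $s_m=1$; for an $s$-word $w$, $p(w)$ deletes the rightmost copy of $m$; $p(L)=\{p(w):w\in L\}$. Zig-zag language (recursive on $n=\sum s_i$): for the empty sequence the only zig-zag language is $\{\varepsilon\}$. For $n\ge1$, $L\subseteq S_s$ is zig-zag if $p(L)$ is a zig-zag language of $p(s)$-words and for every $w'\in p(L)$ both of the following lie in $L$: (a) $w'm$, and (b) $mw'$ if $s_m=1$, or, if $s_m>1$, the word obtained by inserting $m$ immediately next to the rightmost $m$ of $w'$. *)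

(* Words and sequences are [seq nat]; letters are 1-based. *)
From mathcomp Require Import all_boot.
Set Implicit Arguments. Unset Strict Implicit. Unset Printing Implicit Defensive.

Definition sword (s w : seq nat) : Prop :=
  all (fun x => (0 < x) && (x <= size s)) w /\
  forall i, i < size s -> count_mem i.+1 w = nth 0 s i.

Definition pmax (alpha : seq nat) : nat := \max_(a <- alpha) a.

Definition is_pattern (alpha : seq nat) : Prop :=
  0 < pmax alpha /\
  all (fun a => 0 < a) alpha /\
  (forall v, 0 < v <= pmax alpha -> v \in alpha).

Definition order_iso (u alpha : seq nat) : Prop :=
  size u = size alpha /\
  forall a b, a < size alpha -> b < size alpha ->
    ((nth 0 u a < nth 0 u b) = (nth 0 alpha a < nth 0 alpha b)) /\
    ((nth 0 u a == nth 0 u b) = (nth 0 alpha a == nth 0 alpha b)).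

Definition contains (w alpha : seq nat) : Prop :=
  exists m : bitseq, size m = size w /\ order_iso (mask m w) alpha.

Definition Av (s alpha : seq nat) (w : seq nat) : Prop :=
  sword s w /\ ~ contains w alpha.

Definition max_internal (alpha : seq nat) : Prop :=
  forall i, i < size alpha -> nth 0 alpha i = pmax alpha ->
    0 < i /\ i.+1 < size alpha.

Definition max_isolated (alpha : seq nat) : Prop :=
  forall i, i.+1 < size alpha ->
    ~ (nth 0 alpha i = pmax alpha /\ nth 0 alpha i.+1 = pmax alpha).

Definition pseq (s : seq nat) : seq nat :=
  let m := size s in
  if 1 < nth 0 s m.-1 then rcons (take m.-1 s) (nth 0 s m.-1).-1
  else take m.-1 s.

Definition del_last (m : nat) (w : seq nat) : seq nat := rev (rem m (rev w)).

(* insert m immediately next to the rightmost copy of m in w *)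
Definition ins_next_last (m : nat) (w : seq nat) : seq nat :=
  let r := rev w in let i := index m r in rev (take i r ++ m :: drop i r).

Definition lang := seq nat -> Prop.

Definition plang (m : nat) (L : lang) : lang :=
  fun w' => exists w, L w /\ del_last m w = w'.

Fixpoint zigzag_n (n : nat) (s : seq nat) (L : lang) : Prop :=
  match n with
  | 0 => s = [::] /\ (forall w, L w <-> w = [::])
  | n'.+1 =>
      let m := size s in
      (forall w, L w -> sword s w) /\
      zigzag_n n' (pseq s) (plang m L) /\
      (forall w', plang m L w' ->
          L (rcons w' m) /\
          L (if nth 0 s m.-1 == 1 then m :: w' else ins_next_last m w'))
  end.

Definition zigzag (s : seq nat) (L : lang) : Prop := zigzag_n (sumn s) s L.

From mathcomp Require Import all_boot zify.

(* Let m be the largest letter of s.  Deleting the rightmost m is compatible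
   with pattern avoidance and maps s-words onto p(s)-words, so the parent of
   Av_s(alpha) is Av_{p(s)}(alpha).  Conversely, in an occurrence of alpha in
   w'm, in m w' or in w' with its last m doubled that uses the new copy of m,
   that copy must play the role of the maximum k of alpha; it then sits at the
   end or at the start of alpha, or next to another copy of k, which is
   excluded because k is internal and isolated.  Induction on s_1 + ... + s_m
   concludes, with s-words handled as the permutations of the sorted s-word. *)

Lemma subseq_cat_consP {T : eqType} {x : T} {w1 w2 u : seq T} :
  subseq u (w1 ++ x :: w2) ->
  subseq u (w1 ++ w2) \/
  exists u1 u2, [/\ u = u1 ++ x :: u2, subseq u1 w1 & subseq u2 w2].
Proof.
elim: w1 u => [|a w1 IH] [|y u] sub_u; try by left; rewrite sub0seq.
  rewrite /= in sub_u; case: (y =P x) sub_u => [-> | _] sub_u; last by left.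
  by right; exists [::], u.
rewrite /= in sub_u; case: (y =P a) sub_u => [-> | _] /IH [sub_u | [u1 [u2 [-> sub1 sub2]]]].
- by left; rewrite /= eqxx.
- by right; exists (a :: u1), u2; rewrite /= eqxx.
- by left; exact: subseq_trans sub_u (subseq_cons _ _).
- by right; exists u1, u2; split=> //; exact: subseq_trans sub1 (subseq_cons _ _).
Qed.

Lemma containsP (w a : seq nat) :
  contains w a <-> exists2 u, subseq u w & order_iso u a.
Proof.
split=> [[bm [_ iso_bm]] | [u /subseqP [bm size_bm ->] iso_u]]; last by exists bm.
by exists (mask bm w); first exact: mask_subseq.
Qed.

Lemma contains_subseq {w1 w2 a : seq nat} :
  subseq w1 w2 -> contains w1 a -> contains w2 a.
Proof.
move=> sub_w /containsP [u sub_u iso_u]; apply/containsP.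
by exists u; first exact: subseq_trans sub_u sub_w.
Qed.

Lemma order_iso_nth_max {u a : seq nat} (m : nat) {i : nat} :
  order_iso u a -> {in u, forall x, x <= m} -> i < size u -> nth 0 u i = m ->
  nth 0 a i = pmax a.
Proof.
move=> [size_u iso] u_le i_lt u_i; rewrite size_u in i_lt.
apply/eqP; rewrite eqn_leq /pmax (leq_bigmax_seq (F := id)) ?mem_nth //=.
apply/bigmax_leqP_seq => _ /(nthP 0) [j j_lt <-] _.
have [lt_iff _] := iso i j i_lt j_lt.
by rewrite leqNgt -lt_iff -leqNgt u_i u_le // mem_nth // size_u.
Qed.

Section MaxLetter.

Variables (a : seq nat) (m : nat).

Lemma contains_cat_cons_max {p q} :
  {in p ++ m :: q, forall x, x <= m} -> contains (p ++ m :: q) a ->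
  contains (p ++ q) a \/
  exists u1 u2, [/\ subseq u1 p, subseq u2 q, order_iso (u1 ++ m :: u2) a
                  & nth 0 a (size u1) = pmax a].
Proof.
move=> w_le /containsP [u sub_u iso_u].
have [sub_pq | [u1 [u2 [def_u sub1 sub2]]]] := subseq_cat_consP sub_u.
  by left; apply/containsP; exists u.
right; exists u1, u2; split; rewrite -?def_u //.
apply: (order_iso_nth_max m iso_u) => [x /(mem_subseq sub_u)/w_le // | |].
  by rewrite def_u size_cat /= addnS ltnS leq_addr.
by rewrite def_u nth_cat ltnn subnn.
Qed.

Lemma avoids_rcons_max w : max_internal a -> {in rcons w m, forall x, x <= m} ->
  ~ contains w a -> ~ contains (rcons w m) a.
Proof.
rewrite -cats1 => internal w_le avoid_w /(contains_cat_cons_max w_le).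
rewrite cats0 => -[// | [u1 [u2 [_ ]]]]; rewrite subseq0 => /eqP -> [size_u _] max_a.
have u1_lt : size u1 < size a by rewrite -size_u size_cat addn1.
by have [_] := internal _ u1_lt max_a; rewrite -size_u size_cat addn1 ltnn.
Qed.

Lemma avoids_cons_max w : max_internal a -> {in m :: w, forall x, x <= m} ->
  ~ contains w a -> ~ contains (m :: w) a.
Proof.
move=> internal w_le avoid_w /(contains_cat_cons_max (p := [::]) w_le).
case=> [// | [u1 [u2 [+ _ [size_u _] max_a]]]]; rewrite subseq0 => /eqP u1_nil.
have a_gt0 : 0 < size a by rewrite -size_u u1_nil.
by rewrite u1_nil in max_a; have [] := internal 0 a_gt0 max_a.
Qed.

Lemma avoids_double_max p q : max_isolated a ->
  {in p ++ m :: m :: q, forall x, x <= m} ->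
  ~ contains (p ++ m :: q) a -> ~ contains (p ++ m :: m :: q) a.
Proof.
move=> isolated w_le avoid_w /(contains_cat_cons_max w_le).
case=> [// | [u1 [u2 [sub1 sub2 iso_u max1]]]].
have sub_u : subseq (u1 ++ m :: u2) (p ++ m :: m :: q).
  by rewrite cat_subseq //= eqxx.
have [sub2q | [v1 [v2 [def_u2 + _]]]] := subseq_cat_consP (w1 := [::]) sub2.
  by apply: avoid_w; apply/containsP; exists (u1 ++ m :: u2); rewrite ?cat_subseq //= eqxx.
rewrite subseq0 => /eqP v1_nil; rewrite def_u2 v1_nil /= in iso_u sub_u.
have max2 : nth 0 a (size u1).+1 = pmax a.
  apply: (order_iso_nth_max m iso_u) => [x /(mem_subseq sub_u)/w_le // | |].
    by rewrite size_cat /= !addnS !ltnS leq_addr.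
  by rewrite nth_cat ltnNge leqnSn /= subSn // subnn.
apply: (isolated (size u1)) => //; case: iso_u => <- _.
by rewrite size_cat /= !addnS !ltnS leq_addr.
Qed.

End MaxLetter.

Lemma del_last_rcons (m : nat) w : del_last m (rcons w m) = w.
Proof. by rewrite /del_last rev_rcons /= eqxx revK. Qed.

Lemma del_last_subseq (m : nat) w : subseq (del_last m w) w.
Proof. by rewrite /del_last -subseq_rev revK rem_subseq. Qed.

Lemma ins_next_last_split {m : nat} {w} : m \in w ->
  exists p q, w = p ++ m :: q /\ ins_next_last m w = p ++ m :: m :: q.
Proof.
move=> m_in; rewrite /ins_next_last; set r := rev w; set i := index m r.
have i_lt : i < size r by rewrite index_mem mem_rev.
have drop_i : drop i r = m :: drop i.+1 r by rewrite (drop_nth 0 i_lt) nth_index // mem_rev.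
exists (rev (drop i.+1 r)), (rev (take i r)); split.
  by rewrite -{1}[w]revK -/r -{1}(cat_take_drop i r) drop_i rev_cat rev_cons cat_rcons.
by rewrite drop_i rev_cat !rev_cons -!cats1 -!catA.
Qed.

Fixpoint sorted_sword_from (k : nat) (s : seq nat) : seq nat :=
  if s is c :: s' then nseq c k ++ sorted_sword_from k.+1 s' else [::].

Definition sorted_sword (s : seq nat) : seq nat := sorted_sword_from 1 s.

Lemma count_sorted_sword_from k s x :
  count_mem x (sorted_sword_from k s) =
  if k <= x < k + size s then nth 0 s (x - k) else 0.
Proof.
elim: s k => [|c s IH] k /=; first by rewrite addn0; case: ifP => //; lia.
rewrite count_cat count_nseq /= IH addnS.
case: (ltngtP x k) => [// | k_lt_x | ->].
- by have -> : x - k = (x - k.+1).+1 by lia.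
- by rewrite subnn ltnS leq_addr /= mul1n addn0.
Qed.

Lemma sorted_sword_from_rcons k s c :
  sorted_sword_from k (rcons s c) = sorted_sword_from k s ++ nseq c (k + size s).
Proof.
by elim: s k => [|c' s IH] k /=; rewrite ?cats0 ?addn0 // IH catA addSnnS.
Qed.

Lemma swordE s w : sword s w <-> perm_eq w (sorted_sword s).
Proof.
have countE x : count_mem x (sorted_sword s) =
                if 0 < x <= size s then nth 0 s x.-1 else 0.
  by rewrite count_sorted_sword_from add1n ltnS subn1.
split=> [[/allP w_in count_w] | perm_w].
  apply/allP => x _ /=; apply/eqP; rewrite countE.
  case: ifP => [| x_out].
    by case: x => // i /= i_lt; rewrite count_w.
  by apply/count_memPn/negP => /w_in; rewrite x_out.
split=> [|i i_lt]; last by rewrite (permP perm_w) countE /= i_lt.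
apply/allP => x; rewrite (perm_mem perm_w) -has_pred1 has_count countE.
by case: ifP.
Qed.

Lemma pseq_rcons s c : pseq (rcons s c) = if 1 < c then rcons s c.-1 else s.
Proof.
rewrite /pseq size_rcons /= nth_rcons ltnn eqxx.
by rewrite -[rcons s c]cats1 (take_size_cat _ erefl).
Qed.

Lemma sumn_pseq_rcons s c : 0 < c -> (sumn (pseq (rcons s c))).+1 = sumn (rcons s c).
Proof.
by move=> c_gt0; rewrite pseq_rcons; case: ifP => c_gt1; rewrite -!cats1 !sumn_cat /=; lia.
Qed.

Lemma all_pos_pseq_rcons s c :
  all (fun x => 0 < x) (rcons s c) -> all (fun x => 0 < x) (pseq (rcons s c)).
Proof.
rewrite pseq_rcons all_rcons => /andP [c_gt0 s_pos].
by case: ifP => // c_gt1; rewrite all_rcons s_pos andbT; lia.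
Qed.

Lemma sorted_sword_pseq_rcons {s c} : 0 < c ->
  rcons (sorted_sword (pseq (rcons s c))) (size s).+1 = sorted_sword (rcons s c).
Proof.
move=> c_gt0; rewrite pseq_rcons /sorted_sword; case: ifP => [_ | c_le1].
  rewrite !sorted_sword_from_rcons add1n rcons_cat -cats1.
  by rewrite -[[:: _]]/(nseq 1 _) -nseqD addn1 prednK.
have -> : c = 1 by lia.
by rewrite sorted_sword_from_rcons -cats1.
Qed.

Lemma sword_rcons_last {s c w} : 0 < c ->
  sword (pseq (rcons s c)) w -> sword (rcons s c) (rcons w (size s).+1).
Proof.
by move=> c_gt0; rewrite !swordE -(sorted_sword_pseq_rcons c_gt0) -!cats1 perm_cat2r.
Qed.

Lemma sword_leq_size s w : sword s w -> {in w, forall x, x <= size s}.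
Proof. by case=> /allP w_in _ x /w_in /andP []. Qed.

Lemma mem_last_sword_pseq s c w :
  1 < c -> sword (pseq (rcons s c)) w -> (size s).+1 \in w.
Proof.
move=> c_gt1; rewrite swordE => /perm_mem ->.
rewrite pseq_rcons c_gt1 /sorted_sword sorted_sword_from_rcons add1n.
by rewrite mem_cat mem_nseq eqxx -ltnS prednK ?c_gt1 ?orbT // ltnW.
Qed.

Lemma perm_to_del_last {m : nat} {w} : m \in w -> perm_eq w (m :: del_last m w).
Proof.
move=> m_in; have m_in_rev : m \in rev w by rewrite mem_rev.
rewrite /del_last -(perm_rev w) (perm_trans (perm_to_rem m_in_rev)) //.
by rewrite perm_cons perm_sym perm_rev.
Qed.

Lemma sword_del_last s c w : 0 < c ->
  sword (rcons s c) w -> sword (pseq (rcons s c)) (del_last (size s).+1 w).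
Proof.
move=> c_gt0; rewrite !swordE -(sorted_sword_pseq_rcons c_gt0) => perm_w.
have m_in : (size s).+1 \in w by rewrite (perm_mem perm_w) mem_rcons mem_head.
by rewrite -(perm_cons (size s).+1) -(permPl (perm_to_del_last m_in)) (permPl perm_w) perm_rcons.
Qed.

Lemma sword_perm s w1 w2 : perm_eq w1 w2 -> sword s w1 -> sword s w2.
Proof. by move=> perm_w; rewrite !swordE (permPl perm_w). Qed.

Lemma eq_zigzag_n n s (L L' : lang) :
  (forall w, L w <-> L' w) -> zigzag_n n s L -> zigzag_n n s L'.
Proof.
elim: n s L L' => [|n IH] s L L' eqL /=.
  by case=> s_nil L_nil; split=> // w; rewrite -eqL.
case=> L_sword [zz_pL L_ext].
have eq_pL w : plang (size s) L w <-> plang (size s) L' w.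
  by split=> -[v [Lv <-]]; exists v; split=> //; apply/eqL.
split; first by move=> w /eqL /L_sword.
split; first exact: IH eq_pL zz_pL.
by move=> w /eq_pL /L_ext []; rewrite !eqL.
Qed.

Section AvoidanceZigzag.

Variable alpha : seq nat.
Hypotheses (alpha_neq0 : alpha != [::])
  (alpha_internal : max_internal alpha) (alpha_isolated : max_isolated alpha).

Lemma Av_nil w : Av [::] alpha w <-> w = [::].
Proof.
split=> [[/swordE /perm_nilP //] | ->]; split; first exact/swordE.
case/containsP=> u; rewrite subseq0 => /eqP -> [size_alpha _].
by move: alpha_neq0; rewrite -size_eq0 -size_alpha.
Qed.

Lemma Av_extend {s c w} : 0 < c -> Av (pseq (rcons s c)) alpha w ->
  Av (rcons s c) alpha (rcons w (size s).+1) /\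
  Av (rcons s c) alpha
     (if c == 1 then (size s).+1 :: w else ins_next_last (size s).+1 w).
Proof.
move=> c_gt0 [sword_w avoid_w]; set m := (size s).+1.
have sword_wm : sword (rcons s c) (rcons w m) := sword_rcons_last c_gt0 sword_w.
have le_m W : sword (rcons s c) W -> {in W, forall x, x <= m}.
  by move/sword_leq_size; rewrite size_rcons.
split; first by split=> //; apply: avoids_rcons_max (le_m _ sword_wm) avoid_w.
case: eqP => [_ | c_neq1].
  have sword_mw : sword (rcons s c) (m :: w) by apply: sword_perm sword_wm; rewrite perm_rcons.
  by split=> //; apply: avoids_cons_max (le_m _ sword_mw) avoid_w.
have m_in : m \in w by apply: mem_last_sword_pseq sword_w; lia.
have [p [q [def_w ->]]] := ins_next_last_split m_in.
have sword_pmmq : sword (rcons s c) (p ++ m :: m :: q).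
  by apply: sword_perm sword_wm; rewrite def_w perm_rcons -cat1s perm_catCA.
rewrite def_w in avoid_w.
by split=> //; apply: avoids_double_max (le_m _ sword_pmmq) avoid_w.
Qed.

Lemma plang_Av {s c} : 0 < c -> forall w,
  plang (size (rcons s c)) (Av (rcons s c) alpha) w <-> Av (pseq (rcons s c)) alpha w.
Proof.
move=> c_gt0 w; rewrite size_rcons; split=> [[v [[sword_v avoid_v] <-]] | Av_w].
  split; first exact: sword_del_last.
  by move/(contains_subseq (del_last_subseq _ _)).
exists (rcons w (size s).+1); split; last exact: del_last_rcons.
by case: (Av_extend c_gt0 Av_w).
Qed.

Lemma zigzag_n_Av n s :
  all (fun x => 0 < x) s -> sumn s = n -> zigzag_n n s (Av s alpha).
Proof.
elim: n s => [|n IH] s.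
  case: s => [_ _ | c s /= /andP [c_gt0 _]]; last lia.
  by split=> // w; apply: Av_nil.
case/lastP: s => [// | s c] s_pos sum_s.
have c_gt0 : 0 < c by move: s_pos; rewrite all_rcons => /andP [].
split; first by move=> w [].
split.
  apply: eq_zigzag_n (fun w => iff_sym (plang_Av c_gt0 w)) _.
  apply: IH; first exact: all_pos_pseq_rcons.
  by apply/eq_add_S; rewrite sumn_pseq_rcons.
move=> w /(plang_Av c_gt0) Av_w.
by rewrite size_rcons nth_rcons ltnn eqxx; exact: Av_extend.
Qed.

End AvoidanceZigzag.

Theorem mainTheorem4 (s alpha : seq nat) :
  all (fun x => 0 < x) s ->
  is_pattern alpha -> max_internal alpha -> max_isolated alpha ->
  zigzag s (Av s alpha).
Proof.
move=> s_pos [pmax_gt0 _] internal isolated.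
have alpha_neq0 : alpha != [::] by apply: contraTneq pmax_gt0 => ->; rewrite /pmax big_nil.
exact: zigzag_n_Av alpha_neq0 internal isolated _ _ s_pos erefl.
Qed.
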